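(* Let $P=\{(x,y,z)\in\mathbb{R}^3: z=\tfrac12xy\}$. Then $(P,d_{\mathbb{H}})$ bi-Lipschitz embeds in $\mathbb{R}^{19}$.
   Context: For $p=(x,y,z)$, $q=(x',y',z')$, $d_{\mathbb{H}}(p,q)=|x-x'|+|y-y'|+|z-z'+\tfrac12(xy'-x'y)|^{1/2}$. $(A,d_{\mathbb{H}})$ bi-Lipschitz embeds in $\mathbb{R}^{N}$ if there are $L\ge1$ and $f:A\to\mathbb{R}^N$ with $L^{-1}d_{\mathbb{H}}(a,b)\le|f(a)-f(b)|\le Ld_{\mathbb{H}}(a,b)$ for all $a,b\in A$. *)

From Stdlib Require Import Reals.
Open Scope R_scope.

(* Points of the Heisenberg group in exponential coordinates (x,y,z). *)
Definition H3 := (R * R * R)%type.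

Definition dH (p q : H3) : R :=
  let '(x, y, z) := p in
  let '(x', y', z') := q in
  Rabs (x - x') + Rabs (y - y') + sqrt (Rabs (z - z' + / 2 * (x * y' - x' * y))).

(* Euclidean space R^N: vectors are functions nat -> R, only the
   coordinates 0..N-1 matter. *)
Fixpoint sqsum (N : nat) (u : nat -> R) : R :=
  match N with
  | O => 0
  | S n => sqsum n u + u n ^ 2
  end.

Definition euclid_dist (N : nat) (u v : nat -> R) : R :=
  sqrt (sqsum N (fun i => u i - v i)).

Definition biLipschitz_embeds (A : H3 -> Prop) (N : nat) : Prop :=
  exists (L : R) (f : H3 -> (nat -> R)),
    1 <= L /\
    forall a b : H3, A a -> A b ->
      / L * dH a b <= euclid_dist N (f a) (f b) /\
      euclid_dist N (f a) (f b) <= L * dH a b.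

Definition planeP (p : H3) : Prop :=
  let '(x, y, z) := p in z = / 2 * (x * y).

(* On the plane, parametrised by (x, y) and with |y'| <= |y|, d_H is comparable to
   |x - x'| + |y - y'| + sqrt (|x - x'| |y|).  The first two terms are the coordinates x and y.
   For the third, take for each residue r mod 8 the complex series
   sum_(k = r mod 8) a_k(y) exp (i 4^k x) as two real coordinates, where a_k(y) ~ sqrt |y| 2^-k
   is switched on only once 2^-k < sqrt |y|.  When 4^k |x - x'| lies in [1, 4], the k-th term moves
   by about sqrt (|y| |x - x'|), since the chord it spans on the circle is long.  The other scales of
   the same residue are eight octaves away and move geometrically less: finer ones because their
   amplitude is small, coarser ones because exp is Lipschitz.  Summing gives the upper bound;
   isolating the dominant scale gives the lower bound whenever sqrt (|x - x'| |y|) dominates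
   |x - x'| + |y - y'|, and otherwise the coordinates x and y suffice.  Both bounds hold for the
   symmetric partial sums and pass to their pointwise limit. *)

From Stdlib Require Import Reals Lra Lia Psatz ZArith.
From Coquelicot Require Import Coquelicot.
Open Scope R_scope.

Lemma Rpower2_pos t : 0 < Rpower 2 t.
Proof. apply exp_pos. Qed.

Lemma Rpower2_le a b : a <= b -> Rpower 2 a <= Rpower 2 b.
Proof. apply Rle_Rpower; lra. Qed.

Lemma Rpower2_opp_mul t : Rpower 2 (- t) * Rpower 2 t = 1.
Proof. rewrite Rpower_Ropp. field. apply Rgt_not_eq, Rpower2_pos. Qed.

Lemma Rpower2_double t : Rpower 2 (2 * t) = Rpower 2 t ^ 2.
Proof. replace (2 * t) with (t + t) by ring. rewrite Rpower_plus. ring. Qed.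

Lemma Rpower2_opp_nat n : Rpower 2 (- INR n) = (/ 2) ^ n.
Proof. rewrite Rpower_Ropp, Rpower_pow, pow_inv by lra. reflexivity. Qed.

Lemma Rpower2_double_mul t h : 0 <= h -> Rpower 2 (2 * t) * h = (Rpower 2 t * sqrt h) ^ 2.
Proof. intros Hh. rewrite Rpower2_double, Rpow_mult_distr, pow2_sqrt by exact Hh. reflexivity. Qed.

Lemma Rpower2_opp_le_sqrt t h :
  0 <= h -> 1 <= Rpower 2 t * sqrt h -> Rpower 2 (- t) <= sqrt h.
Proof.
  intros Hh H. pose proof (Rpower2_opp_mul t). pose proof (Rpower2_pos (- t)). nra.
Qed.

Lemma exists_Rpower2_window s c : 0 < s -> 0 < c ->
  exists n : Z, 1 <= Rpower 2 (IZR n * c) * s < Rpower 2 c.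
Proof.
  intros Hs Hc.
  set (t := ln s / (c * ln 2)).
  assert (Hln2 : 0 < ln 2) by (rewrite <- ln_1; apply ln_increasing; lra).
  assert (Hst : s = Rpower 2 (t * c)).
  { unfold Rpower, t. replace (ln s / (c * ln 2) * c * ln 2) with (ln s) by (field; lra).
    rewrite exp_ln; auto. }
  destruct (base_Int_part t) as [Hlo Hhi].
  exists (- Int_part t)%Z.
  rewrite Hst, <- Rpower_plus, opp_IZR.
  set (f := - IZR (Int_part t) * c + t * c).
  assert (0 <= f < c) by (unfold f; split; nra).
  rewrite <- (Rpower_O 2) at 1 by lra. split.
  - apply Rpower2_le. lra.
  - apply Rpower_lt; lra.
Qed.

Lemma Rpower2_8 : Rpower 2 8 = 256.
Proof. replace 8 with (INR 8) by (simpl; ring). rewrite Rpower_pow by lra. ring. Qed.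

Lemma Rpower2_decay_le d : Rpower 2 (- 8 * Rabs (IZR d)) <= Rpower 2 (- Rabs (IZR d)).
Proof. apply Rpower2_le. pose proof (Rabs_pos (IZR d)). lra. Qed.

Lemma Rpower2_decay_le_off d : d <> 0%Z ->
  Rpower 2 (- 8 * Rabs (IZR d)) <= / 128 * Rpower 2 (- Rabs (IZR d)).
Proof.
  intros Hd. replace (/ 128) with (Rpower 2 (- INR 7)).
  - rewrite <- Rpower_plus. apply Rpower2_le. rewrite <- abs_IZR.
    assert (1 <= IZR (Z.abs d)) by (apply IZR_le; lia). simpl. lra.
  - rewrite Rpower_Ropp, Rpower_pow by lra. simpl. field.
Qed.

Lemma Rabs_sin_le_1 a : Rabs (sin a) <= 1.
Proof. apply Rabs_le, SIN_bound. Qed.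

Lemma Rabs_cos_le_1 a : Rabs (cos a) <= 1.
Proof. apply Rabs_le, COS_bound. Qed.

Lemma sin_lipschitz a b : Rabs (sin a - sin b) <= Rabs (a - b).
Proof.
  destruct (MVT_abs sin cos b a) as [c [-> _]].
  { intros; apply derivable_pt_lim_sin. }
  pose proof (Rabs_pos (a - b)). pose proof (Rabs_cos_le_1 c). nra.
Qed.

Lemma cos_lipschitz a b : Rabs (cos a - cos b) <= Rabs (a - b).
Proof.
  destruct (MVT_abs cos (fun t => - sin t) b a) as [c [-> _]].
  { intros; apply derivable_pt_lim_cos. }
  rewrite Rabs_Ropp. pose proof (Rabs_pos (a - b)). pose proof (Rabs_sin_le_1 c). nra.
Qed.

Lemma cos_le_3_5 t : 1 <= Rabs t <= 4 -> cos t <= 3 / 5.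
Proof.
  intros Ht.
  assert (Habs : cos t = cos (Rabs t)).
  { unfold Rabs; destruct Rcase_abs; [rewrite cos_neg|]; reflexivity. }
  rewrite Habs. pose proof PI2_3_2. pose proof PI_4.
  destruct (Rle_lt_dec (PI / 2) (Rabs t)).
  - pose proof (cos_le_0 (Rabs t)). lra.
  - assert (Hcos1 : cos 1 <= cos_approx 1 (2 * (0 + 1))) by (apply cos_bound; lra).
    assert (cos (Rabs t) <= cos 1) by (apply cos_decr_1; lra).
    unfold cos_approx, cos_term in Hcos1. simpl in Hcos1. lra.
Qed.

Lemma chord_sqr t t' : (cos t - cos t') ^ 2 + (sin t - sin t') ^ 2 = 2 - 2 * cos (t - t').
Proof.
  rewrite cos_minus. pose proof (sin2_cos2 t). pose proof (sin2_cos2 t'). unfold Rsqr in *. nra.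
Qed.

Lemma Rmax0_lipschitz a b : Rabs (Rmax 0 a - Rmax 0 b) <= Rabs (a - b).
Proof. unfold Rmax. destruct Rle_dec, Rle_dec; apply Rabs_le; split_Rabs; lra. Qed.

Lemma sqrt_mul_sub_le a b : 0 <= b <= a -> sqrt a * (sqrt a - sqrt b) <= a - b.
Proof.
  intros H. pose proof (sqrt_sqrt a ltac:(lra)). pose proof (sqrt_sqrt b ltac:(lra)).
  pose proof (sqrt_pos b). pose proof (sqrt_le_1_alt b a ltac:(lra)). nra.
Qed.

Lemma sqrt_sum_sqr_triang a b c d :
  sqrt (a ^ 2 + b ^ 2) <= sqrt (c ^ 2 + d ^ 2) + sqrt ((a - c) ^ 2 + (b - d) ^ 2).
Proof.
  pose proof (Cmod_triangle (c, d) (a - c, b - d)) as H. unfold Cmod in H. simpl in H.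
  replace (c + (a - c)) with a in H by ring. replace (d + (b - d)) with b in H by ring. exact H.
Qed.

Lemma sqsum_ge0 n w : 0 <= sqsum n w.
Proof. induction n as [|n IH]; simpl; [lra|]. pose proof (pow2_ge_0 (w n)). lra. Qed.

Lemma sqsum_ge_sqr n w i : (i < n)%nat -> w i ^ 2 <= sqsum n w.
Proof.
  induction n as [|n IH]; intros Hi; [lia|]. simpl. pose proof (pow2_ge_0 (w n)).
  destruct (Nat.eq_dec i n) as [-> | Hne].
  - pose proof (sqsum_ge0 n w). lra.
  - pose proof (IH ltac:(lia)). lra.
Qed.

Lemma sqsum_ge_pair n w i j : (i < j)%nat -> (j < n)%nat -> w i ^ 2 + w j ^ 2 <= sqsum n w.
Proof.
  induction n as [|n IH]; intros Hij Hj; [lia|]. simpl. pose proof (pow2_ge_0 (w n)).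
  destruct (Nat.eq_dec j n) as [-> | Hne].
  - pose proof (sqsum_ge_sqr n w i Hij). lra.
  - pose proof (IH Hij ltac:(lia)). lra.
Qed.

Lemma sqsum_le_const n w T : (forall i, (i < n)%nat -> Rabs (w i) <= T) -> sqsum n w <= INR n * T ^ 2.
Proof.
  induction n as [|n IH]; intros Hw; [simpl; lra|].
  change (sqsum (S n) w) with (sqsum n w + w n ^ 2). rewrite S_INR, <- (pow2_abs (w n)).
  pose proof (IH (fun i Hi => Hw i ltac:(lia))). pose proof (Hw n ltac:(lia)).
  pose proof (Rabs_pos (w n)). nra.
Qed.

Lemma euclid_dist_le n u v T : 0 <= T -> (forall i, (i < n)%nat -> Rabs (u i - v i) <= T) ->
  euclid_dist n u v <= sqrt (INR n) * T.
Proof.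
  intros HT Huv. unfold euclid_dist. rewrite <- (sqrt_pow2 T HT), <- sqrt_mult_alt by apply pos_INR.
  apply sqrt_le_1_alt, sqsum_le_const, Huv.
Qed.

Lemma Rabs_le_euclid_dist n u v i : (i < n)%nat -> Rabs (u i - v i) <= euclid_dist n u v.
Proof.
  intros Hi. unfold euclid_dist.
  rewrite <- (sqrt_pow2 (Rabs (u i - v i))), pow2_abs by apply Rabs_pos.
  apply sqrt_le_1_alt, (sqsum_ge_sqr n (fun i => u i - v i)), Hi.
Qed.

Lemma euclid_dist_ge_pair n u v i j : (i < j)%nat -> (j < n)%nat ->
  sqrt ((u i - v i) ^ 2 + (u j - v j) ^ 2) <= euclid_dist n u v.
Proof.
  intros Hij Hj. apply sqrt_le_1_alt, (sqsum_ge_pair n (fun i => u i - v i)); assumption.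
Qed.

Lemma euclid_dist_sym n u v : euclid_dist n u v = euclid_dist n v u.
Proof.
  unfold euclid_dist. f_equal. induction n as [|n IH]; simpl; [reflexivity|]. rewrite IH. ring.
Qed.

Lemma is_lim_seq_euclid_dist n (a b : nat -> nat -> R) (u v : nat -> R) :
  (forall i, is_lim_seq (fun N => a N i) (u i)) -> (forall i, is_lim_seq (fun N => b N i) (v i)) ->
  is_lim_seq (fun N => euclid_dist n (a N) (b N)) (euclid_dist n u v).
Proof.
  intros Ha Hb. apply is_lim_seq_continuous; [apply continuity_pt_sqrt, sqsum_ge0|].
  induction n as [|n IH]; cbn [sqsum]; [apply is_lim_seq_const|].
  assert (Hd : is_lim_seq (fun N => a N n - b N n) (u n - v n)) by (apply is_lim_seq_minus'; auto).
  apply (is_lim_seq_plus' _ _ _ _ IH).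
  rewrite <- Rsqr_pow2.
  apply (is_lim_seq_ext (fun N => Rsqr (a N n - b N n))); [intros; apply Rsqr_pow2|].
  apply is_lim_seq_mult'; exact Hd.
Qed.

Fixpoint zsum (N : nat) (u : Z -> R) : R :=
  match N with
  | O => 0
  | S n => zsum n u + u (- Z.of_nat (S n))%Z + u (Z.of_nat n)
  end.

Lemma zsum_S N u : zsum (S N) u = zsum N u + u (- Z.of_nat (S N))%Z + u (Z.of_nat N).
Proof. reflexivity. Qed.

Lemma zsum_le N u v : (forall j, u j <= v j) -> zsum N u <= zsum N v.
Proof.
  intros Huv. induction N as [|N IH]; [simpl; lra|]. rewrite !zsum_S.
  pose proof (Huv (- Z.of_nat (S N))%Z). pose proof (Huv (Z.of_nat N)). lra.
Qed.

Lemma zsum_plus N u v : zsum N (fun j => u j + v j) = zsum N u + zsum N v.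
Proof. induction N as [|N IH]; [simpl; ring|]. rewrite !zsum_S, IH. ring. Qed.

Lemma zsum_minus N u v : zsum N (fun j => u j - v j) = zsum N u - zsum N v.
Proof. induction N as [|N IH]; [simpl; ring|]. rewrite !zsum_S, IH. ring. Qed.

Lemma Rabs_zsum_le N u : Rabs (zsum N u) <= zsum N (fun j => Rabs (u j)).
Proof.
  induction N as [|N IH]; [simpl; rewrite Rabs_R0; lra|]. rewrite !zsum_S.
  pose proof (Rabs_triang (zsum N u + u (- Z.of_nat (S N))%Z) (u (Z.of_nat N))).
  pose proof (Rabs_triang (zsum N u) (u (- Z.of_nat (S N))%Z)). lra.
Qed.

Lemma zsum_eq0 N u : (forall j, (- Z.of_nat N <= j < Z.of_nat N)%Z -> u j = 0) -> zsum N u = 0.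
Proof.
  induction N as [|N IH]; intros Hu; [reflexivity|].
  rewrite zsum_S, IH, !Hu; try lia. ring. intros j Hj. apply Hu. lia.
Qed.

Lemma zsum_indicator N j0 a : (- Z.of_nat N <= j0 < Z.of_nat N)%Z ->
  zsum N (fun j => if Z.eq_dec j j0 then a else 0) = a.
Proof.
  induction N as [|N IH]; intros Hj; [simpl in Hj; lia|]. rewrite zsum_S.
  destruct (Z.eq_dec (- Z.of_nat (S N)) j0), (Z.eq_dec (Z.of_nat N) j0); try lia.
  - rewrite zsum_eq0; [ring|]. intros j Hj'. destruct Z.eq_dec; [lia|reflexivity].
  - rewrite zsum_eq0; [ring|]. intros j Hj'. destruct Z.eq_dec; [lia|reflexivity].
  - rewrite IH by lia. ring.
Qed.

Lemma zsum_telescope N u (g : Z -> R) :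
  (forall j, u j <= g (Z.succ j) - g j) -> zsum N u <= g (Z.of_nat N) - g (- Z.of_nat N)%Z.
Proof.
  intros Hu. induction N as [|N IH]; [simpl; lra|]. rewrite zsum_S.
  pose proof (Hu (- Z.of_nat (S N))%Z) as H1. pose proof (Hu (Z.of_nat N)) as H2.
  replace (Z.succ (- Z.of_nat (S N))) with (- Z.of_nat N)%Z in H1 by lia.
  replace (Z.succ (Z.of_nat N)) with (Z.of_nat (S N)) in H2 by lia.
  lra.
Qed.

(* The weights [2^-|d|] telescope against [g d = 2^d] for [d <= 0]
   and [g d = 3 - 2^(1-d)] for [d > 0]. *)
Lemma zsum_le_geometric N u m B : 0 <= B ->
  (forall j, u j <= B * Rpower 2 (- Rabs (IZR (j - m)))) -> zsum N u <= 3 * B.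
Proof.
  intros HB Hu.
  set (g := fun d : Z => if Z.leb d 0 then Rpower 2 (IZR d) else 3 - Rpower 2 (1 - IZR d)).
  assert (Hg : forall d, 0 <= g d <= 3).
  { intros d. unfold g. destruct (Z.leb_spec d 0).
    - pose proof (Rpower2_pos (IZR d)). pose proof (Rpower2_le (IZR d) 0 (IZR_le _ _ H)).
      rewrite Rpower_O in * by lra. lra.
    - pose proof (Rpower2_pos (1 - IZR d)). assert (IZR d >= 1) by (apply Rle_ge, IZR_le; lia).
      pose proof (Rpower2_le (1 - IZR d) 0 ltac:(lra)). rewrite Rpower_O in * by lra. lra. }
  assert (Hstep : forall d, Rpower 2 (- Rabs (IZR d)) <= g (Z.succ d) - g d).
  { intros d. unfold g. rewrite succ_IZR.
    destruct (Z.leb_spec (Z.succ d) 0), (Z.leb_spec d 0); try lia.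
    - rewrite Rabs_left by (apply IZR_lt; lia). rewrite Ropp_involutive.
      rewrite Rpower_plus, Rpower_1 by lra. lra.
    - replace d with 0%Z by lia.
      rewrite Rabs_R0, Ropp_0, Rplus_0_l, Rminus_diag, Rpower_O by lra. lra.
    - rewrite Rabs_right by (apply Rle_ge, IZR_le; lia).
      replace (1 - IZR d) with (1 + - IZR d) by ring.
      replace (1 - (IZR d + 1)) with (- IZR d) by ring.
      rewrite Rpower_plus, Rpower_1 by lra. lra. }
  apply Rle_trans with (zsum N (fun j => B * (g (Z.succ (j - m)) - g (j - m)%Z))).
  { apply zsum_le. intros j. eapply Rle_trans; [apply Hu|]. apply Rmult_le_compat_l; auto. }
  eapply Rle_trans.
  - apply (zsum_telescope N _ (fun j => B * g (j - m)%Z)). intros j.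
    replace (Z.succ j - m)%Z with (Z.succ (j - m)) by lia. lra.
  - pose proof (Hg (Z.of_nat N - m)%Z). pose proof (Hg (- Z.of_nat N - m)%Z). nra.
Qed.

Lemma zsum_ex_lim u C :
  (forall n, Rabs (u (- Z.of_nat (S n))%Z) + Rabs (u (Z.of_nat n)) <= C * (/ 2) ^ n) ->
  ex_finite_lim_seq (fun N => zsum N u).
Proof.
  intros Hu. set (v := fun n => u (- Z.of_nat (S n))%Z + u (Z.of_nat n)).
  assert (Hv : ex_series v).
  { apply (@ex_series_le R_AbsRing R_CompleteNormedModule v (fun n => C * (/ 2) ^ n)).
    - intros n. eapply Rle_trans; [apply Rabs_triang | apply Hu].
    - apply (ex_series_scal_l C (fun n => (/ 2) ^ n)), ex_series_geom.
      rewrite Rabs_right; lra. }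
  exists (Series v). apply is_lim_seq_incr_1, (is_lim_seq_ext (sum_n v)).
  - induction n as [|n IH]; [rewrite sum_O, zsum_S; unfold v; simpl; ring|].
    rewrite sum_Sn, IH, (zsum_S (S n)). unfold v, plus; simpl. ring.
  - apply Series_correct, Hv.
Qed.

Lemma dH_sym p q : dH p q = dH q p.
Proof.
  destruct p as [[x y] z], q as [[x' y'] z']. unfold dH; simpl.
  rewrite (Rabs_minus_sym x), (Rabs_minus_sym y). f_equal. f_equal.
  rewrite <- Rabs_Ropp. f_equal. ring.
Qed.

Definition plane_point (x y : R) : H3 := (x, y, / 2 * (x * y)).

Lemma dH_plane_point x y x' y' :
  dH (plane_point x y) (plane_point x' y')
  = Rabs (x - x') + Rabs (y - y') + sqrt (Rabs (x - x') * (Rabs (y + y') / 2)).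
Proof.
  unfold dH, plane_point. do 3 f_equal.
  replace (/ 2 * (x * y) - / 2 * (x' * y') + / 2 * (x * y' - x' * y))
    with ((x - x') * ((y + y') / 2)) by field.
  rewrite Rabs_mult. f_equal. unfold Rdiv. rewrite Rabs_mult, (Rabs_right (/ 2)) by lra. reflexivity.
Qed.

Lemma dH_plane_ge x y x' y' :
  Rabs (x - x') + Rabs (y - y') <= dH (plane_point x y) (plane_point x' y').
Proof. rewrite dH_plane_point. pose proof (sqrt_pos (Rabs (x - x') * (Rabs (y + y') / 2))). lra. Qed.

Lemma sqrt_mul_le_dH_plane x y x' y' :
  sqrt (Rabs (x - x')) * sqrt (Rabs y) <= dH (plane_point x y) (plane_point x' y').
Proof.
  rewrite dH_plane_point, <- sqrt_mult_alt by apply Rabs_pos.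
  set (h := Rabs (x - x')). set (dy := Rabs (y - y')).
  set (V := sqrt (h * (Rabs (y + y') / 2))).
  assert (Hh : 0 <= h) by apply Rabs_pos. assert (Hdy : 0 <= dy) by apply Rabs_pos.
  assert (Hyy : Rabs y <= Rabs (y + y') / 2 + dy / 2).
  { pose proof (Rabs_triang (y + y') (y - y')). replace (y + y' + (y - y')) with (2 * y) in H by ring.
    rewrite Rabs_mult, (Rabs_right 2) in H by lra. unfold dy. lra. }
  assert (HV : 0 <= h * (Rabs (y + y') / 2)) by (pose proof (Rabs_pos (y + y')); nra).
  pose proof (sqrt_sqrt _ HV). pose proof (sqrt_pos (h * (Rabs (y + y') / 2))). fold V in H, H0.
  rewrite <- (sqrt_pow2 (h + dy + V)) by lra. apply sqrt_le_1_alt. nra.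
Qed.

Lemma dH_plane_le x y x' y' : Rabs y' <= Rabs y ->
  dH (plane_point x y) (plane_point x' y')
  <= Rabs (x - x') + Rabs (y - y') + sqrt (Rabs (x - x')) * sqrt (Rabs y).
Proof.
  intros Hy. rewrite dH_plane_point, <- sqrt_mult_alt by apply Rabs_pos.
  apply Rplus_le_compat_l, sqrt_le_1_alt, Rmult_le_compat_l; [apply Rabs_pos|].
  pose proof (Rabs_triang y y'). lra.
Qed.

Definition scale (r : nat) (j : Z) : R := 8 * IZR j + INR r.

Lemma scale_mod8 n : scale (Z.to_nat (n mod 8)) (n / 8) = IZR n.
Proof.
  unfold scale. rewrite INR_IZR_INZ, Z2Nat.id by (apply Z.mod_pos_bound; lia).
  rewrite <- mult_IZR, <- plus_IZR. f_equal. pose proof (Z_div_mod_eq_full n 8). lia.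
Qed.

Lemma Rpower2_scale_below r j js : (j <= js)%Z ->
  Rpower 2 (scale r j) = Rpower 2 (scale r js) * Rpower 2 (- 8 * Rabs (IZR (j - js))).
Proof.
  intros Hj. rewrite <- Rpower_plus, Rabs_left1 by (apply IZR_le; lia).
  unfold scale. rewrite minus_IZR. f_equal. ring.
Qed.

Lemma Rpower2_opp_scale_above r j js : (js <= j)%Z ->
  Rpower 2 (- scale r j) = Rpower 2 (- scale r js) * Rpower 2 (- 8 * Rabs (IZR (j - js))).
Proof.
  intros Hj. rewrite <- Rpower_plus, Rabs_right by (apply Rle_ge, IZR_le; lia).
  unfold scale. rewrite minus_IZR. f_equal. ring.
Qed.

Lemma exists_scale_window r s : 0 < s -> exists js, 1 <= Rpower 2 (scale r js) * s <= Rpower 2 8.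
Proof.
  intros Hs. destruct (exists_Rpower2_window (Rpower 2 (INR r) * s) 8) as [n Hn].
  - pose proof (Rpower2_pos (INR r)). nra.
  - lra.
  - exists n. unfold scale. rewrite Rpower_plus, Rmult_comm with (r1 := 8), Rmult_assoc. lra.
Qed.

(* The cut-off [- 2^-k] makes the amplitude vanish unless [2^-k < sqrt |y|], which is what
   makes the variation in [y], summed over all scales, bounded by [|y - y'|]. *)
Definition amp (k y : R) : R := Rmax 0 (Rpower 2 (- k) * (sqrt (Rabs y) - Rpower 2 (- k))).

Lemma amp_ge0 k y : 0 <= amp k y.
Proof. apply Rmax_l. Qed.

Lemma amp_ge k y : Rpower 2 (- k) * (sqrt (Rabs y) - Rpower 2 (- k)) <= amp k y.
Proof. apply Rmax_r. Qed.

Lemma amp_le k y : amp k y <= sqrt (Rabs y) * Rpower 2 (- k).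
Proof.
  apply Rmax_lub; pose proof (Rpower2_pos (- k)); pose proof (sqrt_pos (Rabs y)); nra.
Qed.

Lemma amp_eq0 k y : Rpower 2 k * sqrt (Rabs y) <= 1 -> amp k y = 0.
Proof.
  intros H. apply Rmax_left.
  pose proof (Rpower2_opp_mul k). pose proof (Rpower2_pos (- k)). pose proof (Rpower2_pos k).
  assert (sqrt (Rabs y) <= Rpower 2 (- k)) by nra. nra.
Qed.

Lemma amp_le_coarse k y : amp k y <= Rabs y * sqrt (Rabs y) * Rpower 2 k.
Proof.
  rewrite <- (sqrt_sqrt (Rabs y) (Rabs_pos y)) at 1. set (s := sqrt (Rabs y)).
  pose proof (Rpower2_opp_mul k) as Hinv. pose proof (Rpower2_pos (- k)). pose proof (Rpower2_pos k).
  assert (Hs0 : 0 <= s) by apply sqrt_pos.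
  destruct (Rle_lt_dec (Rpower 2 k * s) 1) as [Hs | Hs].
  - rewrite amp_eq0 by exact Hs. repeat apply Rmult_le_pos; lra.
  - eapply Rle_trans; [apply amp_le|]. fold s.
    assert (Rpower 2 (- k) <= s) by exact (Rpower2_opp_le_sqrt _ _ (Rabs_pos y) (Rlt_le _ _ Hs)).
    assert (Rpower 2 (- k) * Rpower 2 (- k) <= s * s) by nra.
    replace (s * Rpower 2 (- k)) with (s * (Rpower 2 (- k) * Rpower 2 (- k)) * Rpower 2 k).
    2: { rewrite <- (Rmult_1_r (s * Rpower 2 (- k))), <- Hinv. ring. }
    apply Rmult_le_compat_r; nra.
Qed.

Lemma amp_lipschitz k y y' : Rabs y' <= Rabs y ->
  Rabs (amp k y - amp k y') <= Rpower 2 (- k) * (sqrt (Rabs y) - sqrt (Rabs y')).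
Proof.
  intros Hy. pose proof (Rpower2_pos (- k)). pose proof (sqrt_le_1_alt _ _ Hy).
  eapply Rle_trans; [apply Rmax0_lipschitz|].
  rewrite Rabs_right by nra. right; ring.
Qed.

Lemma amp_diff_decay r js j y y' : Rabs y' <= Rabs y ->
  1 <= Rpower 2 (scale r js) * sqrt (Rabs y) <= Rpower 2 8 ->
  Rabs (amp (scale r j) y - amp (scale r j) y') <= Rabs (y - y') * Rpower 2 (- Rabs (IZR (j - js))).
Proof.
  intros Hy [H1 H2].
  pose proof (Rpower2_pos (- Rabs (IZR (j - js)))). pose proof (Rabs_pos (y - y')).
  destruct (Z_lt_le_dec j js) as [Hj | Hj].
  - assert (Hfar : Rpower 2 (scale r j) * sqrt (Rabs y) <= 1).
    { assert (Hk : Rpower 2 (scale r j) * Rpower 2 8 <= Rpower 2 (scale r js)).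
      { rewrite <- Rpower_plus. apply Rpower2_le. unfold scale.
        assert (IZR (j + 1) <= IZR js) by (apply IZR_le; lia). rewrite plus_IZR in *. lra. }
      pose proof (Rpower2_pos 8). pose proof (sqrt_pos (Rabs y)). nra. }
    pose proof (sqrt_le_1_alt _ _ Hy). pose proof (sqrt_pos (Rabs y')).
    pose proof (Rpower2_pos (scale r j)).
    rewrite amp_eq0, (amp_eq0 _ y'), Rminus_0_r, Rabs_R0 by nra. nra.
  - eapply Rle_trans; [apply amp_lipschitz, Hy|].
    rewrite (Rpower2_opp_scale_above r j js) by exact Hj.
    pose proof (Rpower2_opp_le_sqrt _ _ (Rabs_pos y) H1).
    pose proof (sqrt_mul_sub_le (Rabs y) (Rabs y') (conj (Rabs_pos y') Hy)).
    pose proof (Rabs_triang_inv y y'). pose proof (sqrt_le_1_alt _ _ Hy).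
    pose proof (Rpower2_decay_le (j - js)). pose proof (Rpower2_pos (- scale r js)).
    pose proof (Rpower2_pos (- 8 * Rabs (IZR (j - js)))).
    assert (Rpower 2 (- scale r js) * (sqrt (Rabs y) - sqrt (Rabs y')) <= Rabs (y - y')) by nra.
    nra.
Qed.

Lemma zsum_amp_diff_le N r y y' : Rabs y' <= Rabs y ->
  zsum N (fun j => Rabs (amp (scale r j) y - amp (scale r j) y')) <= 3 * Rabs (y - y').
Proof.
  intros Hy. pose proof (Rabs_pos (y - y')).
  destruct (Req_dec (Rabs y) 0) as [Hy0 | Hy0].
  - assert (Hy0' : Rabs y' = 0) by (pose proof (Rabs_pos y'); lra).
    apply (zsum_le_geometric _ _ 0%Z); [lra|]. intros j.
    unfold amp. rewrite Hy0, Hy0', Rminus_diag, Rabs_R0.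
    pose proof (Rpower2_pos (- Rabs (IZR (j - 0)))). nra.
  - assert (Hs : 0 < sqrt (Rabs y)) by (apply sqrt_lt_R0; pose proof (Rabs_pos y); lra).
    destruct (exists_scale_window r _ Hs) as [js Hjs].
    apply (zsum_le_geometric _ _ js); [lra|]. intros j. apply amp_diff_decay; assumption.
Qed.

Section Coordinate.

Variable phi : R -> R.
Hypothesis phi_lipschitz : forall a b, Rabs (phi a - phi b) <= Rabs (a - b).
Hypothesis phi_bounded : forall a, Rabs (phi a) <= 1.

Definition term (r : nat) (x y : R) (j : Z) : R :=
  amp (scale r j) y * phi (Rpower 2 (2 * scale r j) * x).

Definition osc (k x x' y : R) : R :=
  amp k y * Rabs (phi (Rpower 2 (2 * k) * x) - phi (Rpower 2 (2 * k) * x')).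

Lemma osc_le_fine k x x' y : osc k x x' y <= sqrt (Rabs y) * Rpower 2 k * Rabs (x - x').
Proof.
  unfold osc. pose proof (amp_ge0 k y). pose proof (amp_le k y).
  pose proof (phi_lipschitz (Rpower 2 (2 * k) * x) (Rpower 2 (2 * k) * x')) as Hphi.
  rewrite <- Rmult_minus_distr_l, Rabs_mult, (Rabs_right (Rpower 2 _)) in Hphi
    by (apply Rle_ge, Rlt_le, Rpower2_pos).
  replace (Rpower 2 k) with (Rpower 2 (- k) * Rpower 2 (2 * k))
    by (rewrite <- Rpower_plus; f_equal; ring).
  pose proof (Rabs_pos (phi (Rpower 2 (2 * k) * x) - phi (Rpower 2 (2 * k) * x'))).
  apply Rle_trans with (sqrt (Rabs y) * Rpower 2 (- k) * (Rpower 2 (2 * k) * Rabs (x - x'))).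
  - apply Rmult_le_compat; assumption.
  - right; ring.
Qed.

Lemma osc_le_coarse k x x' y : osc k x x' y <= 2 * sqrt (Rabs y) * Rpower 2 (- k).
Proof.
  unfold osc. pose proof (amp_ge0 k y). pose proof (amp_le k y).
  assert (Rabs (phi (Rpower 2 (2 * k) * x) - phi (Rpower 2 (2 * k) * x')) <= 2).
  { eapply Rle_trans; [apply Rabs_triang|]. rewrite Rabs_Ropp.
    pose proof (phi_bounded (Rpower 2 (2 * k) * x)).
    pose proof (phi_bounded (Rpower 2 (2 * k) * x')). lra. }
  pose proof (Rabs_pos (phi (Rpower 2 (2 * k) * x) - phi (Rpower 2 (2 * k) * x'))). nra.
Qed.

Lemma osc_decay r js j x x' y c : 2 <= c ->
  1 <= Rpower 2 (scale r js) * sqrt (Rabs (x - x')) <= c ->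
  osc (scale r j) x x' y
  <= c * (sqrt (Rabs (x - x')) * sqrt (Rabs y)) * Rpower 2 (- 8 * Rabs (IZR (j - js))).
Proof.
  intros Hc [H1 H2]. set (h := Rabs (x - x')) in *.
  set (w := Rpower 2 (- 8 * Rabs (IZR (j - js)))).
  assert (Hh : 0 <= h) by apply Rabs_pos.
  assert (Hw : 0 < w) by apply Rpower2_pos.
  pose proof (sqrt_pos h). pose proof (sqrt_pos (Rabs y)).
  assert (Hsw : 0 <= sqrt h * sqrt (Rabs y) * w) by (repeat apply Rmult_le_pos; lra).
  destruct (Z_le_gt_dec j js) as [Hj | Hj].
  - eapply Rle_trans; [apply osc_le_fine|]. fold h.
    rewrite (Rpower2_scale_below r j js Hj). fold w.
    rewrite <- (sqrt_sqrt h Hh) at 1. nra.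
  - eapply Rle_trans; [apply osc_le_coarse|].
    rewrite (Rpower2_opp_scale_above r j js) by lia. fold w.
    pose proof (Rpower2_opp_le_sqrt _ _ Hh H1).
    assert (2 * Rpower 2 (- scale r js) <= c * sqrt h) by nra.
    assert (0 <= sqrt (Rabs y) * w) by (apply Rmult_le_pos; lra). nra.
Qed.

Lemma Rabs_term_sub_le r x x' y y' j :
  Rabs (term r x y j - term r x' y' j)
  <= osc (scale r j) x x' y + Rabs (amp (scale r j) y - amp (scale r j) y').
Proof.
  unfold term, osc.
  set (X := Rpower 2 (2 * scale r j) * x). set (X' := Rpower 2 (2 * scale r j) * x').
  replace (amp (scale r j) y * phi X - amp (scale r j) y' * phi X')
    with (amp (scale r j) y * (phi X - phi X') + (amp (scale r j) y - amp (scale r j) y') * phi X')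
    by ring.
  eapply Rle_trans; [apply Rabs_triang|]. rewrite !Rabs_mult, (Rabs_right (amp _ y))
    by apply Rle_ge, amp_ge0.
  pose proof (phi_bounded X'). pose proof (Rabs_pos (amp (scale r j) y - amp (scale r j) y')). nra.
Qed.

Lemma zsum_osc_le N r x x' y :
  zsum N (fun j => osc (scale r j) x x' y) <= 768 * (sqrt (Rabs (x - x')) * sqrt (Rabs y)).
Proof.
  set (s := sqrt (Rabs (x - x')) * sqrt (Rabs y)).
  assert (Hs0 : 0 <= s) by (apply Rmult_le_pos; apply sqrt_pos).
  replace 768 with (3 * 256) by ring. rewrite Rmult_assoc.
  destruct (Req_dec (Rabs (x - x')) 0) as [Hh | Hh].
  - apply (zsum_le_geometric _ _ 0%Z); [nra|]. intros j.
    eapply Rle_trans; [apply osc_le_fine|]. rewrite Hh, Rmult_0_r.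
    pose proof (Rpower2_pos (- Rabs (IZR (j - 0)))). nra.
  - assert (Hs : 0 < sqrt (Rabs (x - x'))) by (apply sqrt_lt_R0; pose proof (Rabs_pos (x - x')); lra).
    destruct (exists_scale_window r _ Hs) as [js Hjs]. rewrite Rpower2_8 in Hjs.
    apply (zsum_le_geometric _ _ js); [nra|]. intros j.
    eapply Rle_trans; [apply (osc_decay r js j x x' y 256); [lra | exact Hjs]|]. fold s.
    pose proof (Rpower2_decay_le (j - js)). nra.
Qed.

Lemma zsum_term_sub_le N r x x' y y' : Rabs y' <= Rabs y ->
  Rabs (zsum N (term r x y) - zsum N (term r x' y'))
  <= 768 * (sqrt (Rabs (x - x')) * sqrt (Rabs y)) + 3 * Rabs (y - y').
Proof.
  intros Hy. rewrite <- zsum_minus. eapply Rle_trans; [apply Rabs_zsum_le|].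
  eapply Rle_trans; [apply zsum_le; intros j; apply Rabs_term_sub_le|].
  rewrite zsum_plus. pose proof (zsum_osc_le N r x x' y). pose proof (zsum_amp_diff_le N r y y' Hy).
  lra.
Qed.

Lemma zsum_term_sub_main N r j0 x x' y y' : Rabs y' <= Rabs y ->
  (- Z.of_nat N <= j0 < Z.of_nat N)%Z ->
  1 <= Rpower 2 (scale r j0) * sqrt (Rabs (x - x')) <= 2 ->
  Rabs (zsum N (term r x y) - zsum N (term r x' y')
        - amp (scale r j0) y
          * (phi (Rpower 2 (2 * scale r j0) * x) - phi (Rpower 2 (2 * scale r j0) * x')))
  <= 3 / 64 * (sqrt (Rabs (x - x')) * sqrt (Rabs y)) + 3 * Rabs (y - y').
Proof.
  intros Hy Hj0 Hscale.
  set (M := amp (scale r j0) y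
            * (phi (Rpower 2 (2 * scale r j0) * x) - phi (Rpower 2 (2 * scale r j0) * x'))).
  set (s := sqrt (Rabs (x - x')) * sqrt (Rabs y)).
  assert (Hs0 : 0 <= s) by (apply Rmult_le_pos; apply sqrt_pos).
  rewrite <- (zsum_indicator N j0 M Hj0), <- !zsum_minus.
  eapply Rle_trans; [apply Rabs_zsum_le|].
  apply Rle_trans with (zsum N (fun j => (if Z.eq_dec j j0 then 0 else osc (scale r j) x x' y)
                                    + Rabs (amp (scale r j) y - amp (scale r j) y'))).
  - apply zsum_le. intros j. destruct (Z.eq_dec j j0) as [-> | Hne].
    + unfold term, M. rewrite Rplus_0_l.
      replace (_ - _ - _) with ((amp (scale r j0) y - amp (scale r j0) y')
                                * phi (Rpower 2 (2 * scale r j0) * x')) by ring.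
      rewrite Rabs_mult. pose proof (phi_bounded (Rpower 2 (2 * scale r j0) * x')).
      pose proof (Rabs_pos (amp (scale r j0) y - amp (scale r j0) y')). nra.
    + rewrite Rminus_0_r. apply Rabs_term_sub_le.
  - rewrite zsum_plus. pose proof (zsum_amp_diff_le N r y y' Hy).
    assert (zsum N (fun j => if Z.eq_dec j j0 then 0 else osc (scale r j) x x' y) <= 3 * (s / 64)).
    { apply (zsum_le_geometric _ _ j0); [lra|]. intros j.
      pose proof (Rpower2_pos (- Rabs (IZR (j - j0)))).
      destruct (Z.eq_dec j j0) as [_ | Hne]; [nra|].
      eapply Rle_trans; [apply (osc_decay r j0 j x x' y 2); [lra | exact Hscale]|]. fold s.
      pose proof (Rpower2_decay_le_off (j - j0) ltac:(lia)). nra. }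
    lra.
Qed.

Lemma zsum_term_ex_lim r x y : (r < 8)%nat -> ex_finite_lim_seq (fun N => zsum N (term r x y)).
Proof.
  intros Hr. apply (zsum_ex_lim _ (Rabs y * sqrt (Rabs y) + sqrt (Rabs y))). intros n.
  assert (Hterm : forall j, Rabs (term r x y j) <= amp (scale r j) y).
  { intros j. unfold term. rewrite Rabs_mult, (Rabs_right (amp _ y)) by apply Rle_ge, amp_ge0.
    pose proof (phi_bounded (Rpower 2 (2 * scale r j) * x)). pose proof (amp_ge0 (scale r j) y).
    nra. }
  rewrite <- Rpower2_opp_nat.
  assert (Hr' : INR r <= 7) by (replace 7 with (INR 7) by (simpl; ring); apply le_INR; lia).
  pose proof (pos_INR n). pose proof (pos_INR r).
  assert (Hneg : amp (scale r (- Z.of_nat (S n))) y <= Rabs y * sqrt (Rabs y) * Rpower 2 (- INR n)).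
  { eapply Rle_trans; [apply amp_le_coarse|]. apply Rmult_le_compat_l.
    - apply Rmult_le_pos; [apply Rabs_pos | apply sqrt_pos].
    - apply Rpower2_le. unfold scale. rewrite opp_IZR, <- INR_IZR_INZ, S_INR. lra. }
  assert (Hpos : amp (scale r (Z.of_nat n)) y <= sqrt (Rabs y) * Rpower 2 (- INR n)).
  { eapply Rle_trans; [apply amp_le|]. apply Rmult_le_compat_l; [apply sqrt_pos|].
    apply Rpower2_le. unfold scale. rewrite <- INR_IZR_INZ. lra. }
  pose proof (Hterm (- Z.of_nat (S n))%Z). pose proof (Hterm (Z.of_nat n)). lra.
Qed.

End Coordinate.

(* Coordinates [2 + 2 r] and [3 + 2 r], for [r < 8], are the cosine and sine series over the
   scales [k = r mod 8]; coordinate 18 is unused. *)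
Definition embedding_at (N : nat) (p : H3) (i : nat) : R :=
  let '(x, y, _) := p in
  match i with
  | O => x
  | 1%nat => y
  | S (S i') =>
      if (i' <? 16)%nat
      then zsum N (term (if Nat.even i' then cos else sin) (Nat.div2 i') x y)
      else 0
  end.

Definition embedding (p : H3) (i : nat) : R := Lim_seq (fun N => embedding_at N p i).

Lemma embedding_at_cos N x y z r : (r < 8)%nat ->
  embedding_at N (x, y, z) (2 + 2 * r) = zsum N (term cos r x y).
Proof.
  intros Hr. replace (2 + 2 * r)%nat with (S (S (2 * r))) by lia.
  unfold embedding_at; cbv beta iota. destruct (Nat.ltb_spec (2 * r) 16); [|lia].
  rewrite Nat.even_mul, Nat.div2_double. reflexivity.
Qed.

Lemma embedding_at_sin N x y z r : (r < 8)%nat ->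
  embedding_at N (x, y, z) (3 + 2 * r) = zsum N (term sin r x y).
Proof.
  intros Hr. replace (3 + 2 * r)%nat with (S (S (S (2 * r)))) by lia.
  unfold embedding_at; cbv beta iota. destruct (Nat.ltb_spec (S (2 * r)) 16); [|lia].
  rewrite Nat.even_succ, Nat.odd_mul, Nat.div2_succ_double. reflexivity.
Qed.

Lemma is_lim_seq_embedding_at p i : is_lim_seq (fun N => embedding_at N p i) (embedding p i).
Proof.
  apply Lim_seq_correct'. destruct p as [[x y] z]. destruct i as [|[|i]]; simpl.
  - exists x. apply is_lim_seq_const.
  - exists y. apply is_lim_seq_const.
  - destruct (Nat.ltb_spec i 16) as [Hi | Hi]; [|exists 0; apply is_lim_seq_const].
    assert (Hr : (Nat.div2 i < 8)%nat)
      by (pose proof (Nat.div2_odd i); destruct (Nat.odd i); simpl in *; lia).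
    destruct (Nat.even i); apply zsum_term_ex_lim; auto using Rabs_cos_le_1, Rabs_sin_le_1.
Qed.

Lemma zsum_cos_sin_sub_ge N r j0 x x' y y' : Rabs y' <= Rabs y ->
  (- Z.of_nat N <= j0 < Z.of_nat N)%Z ->
  1 <= Rpower 2 (scale r j0) * sqrt (Rabs (x - x')) <= 2 ->
  64 * (Rabs (x - x') + Rabs (y - y')) <= sqrt (Rabs (x - x')) * sqrt (Rabs y) ->
  sqrt (Rabs (x - x')) * sqrt (Rabs y) / 4
  <= sqrt ((zsum N (term cos r x y) - zsum N (term cos r x' y')) ^ 2
           + (zsum N (term sin r x y) - zsum N (term sin r x' y')) ^ 2).
Proof.
  intros Hy Hj0 Hscale Hsmall.
  set (h := Rabs (x - x')) in *. set (s := sqrt h * sqrt (Rabs y)) in *.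
  set (k := scale r j0) in *. set (a := amp k y).
  set (X := Rpower 2 (2 * k) * x). set (X' := Rpower 2 (2 * k) * x').
  set (Dc := zsum N (term cos r x y) - zsum N (term cos r x' y')).
  set (Ds := zsum N (term sin r x y) - zsum N (term sin r x' y')).
  set (Mc := a * (cos X - cos X')). set (Ms := a * (sin X - sin X')).
  assert (Hh : 0 <= h) by apply Rabs_pos. pose proof (Rabs_pos (y - y')).
  assert (Hs0 : 0 <= s) by (apply Rmult_le_pos; apply sqrt_pos).
  pose proof Hscale as [Hscale1 Hscale2].
  assert (Ha : 31 / 64 * s <= a).
  { pose proof (amp_ge k y). fold a in H0.
    pose proof (Rpower2_opp_le_sqrt k h Hh Hscale1).
    pose proof (Rpower2_opp_mul k). pose proof (Rpower2_pos (- k)). pose proof (sqrt_pos (Rabs y)).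
    assert (sqrt h <= 2 * Rpower 2 (- k)) by nra.
    assert (Rpower 2 (- k) * Rpower 2 (- k) <= h) by (rewrite <- (sqrt_sqrt h Hh); nra).
    unfold s in *. nra. }
  assert (Hchord : 4 / 5 <= (cos X - cos X') ^ 2 + (sin X - sin X') ^ 2).
  { rewrite chord_sqr. assert (cos (X - X') <= 3 / 5); [|lra]. apply cos_le_3_5.
    unfold X, X'. rewrite <- Rmult_minus_distr_l, Rabs_mult, Rabs_right, Rpower2_double_mul
      by (apply Rle_ge, Rlt_le, Rpower2_pos || exact Hh).
    fold h k. nra. }
  assert (HM : 41 / 100 * s <= sqrt (Mc ^ 2 + Ms ^ 2)).
  { rewrite <- (sqrt_pow2 (41 / 100 * s)) by lra. apply sqrt_le_1_alt.
    replace (Mc ^ 2 + Ms ^ 2) with (a ^ 2 * ((cos X - cos X') ^ 2 + (sin X - sin X') ^ 2))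
      by (unfold Mc, Ms; ring).
    nra. }
  assert (Herr : forall phi, (forall a b, Rabs (phi a - phi b) <= Rabs (a - b)) ->
    (forall a, Rabs (phi a) <= 1) ->
    (zsum N (term phi r x y) - zsum N (term phi r x' y') - a * (phi X - phi X')) ^ 2
    <= (3 / 32 * s) ^ 2).
  { intros phi Hlip Hbnd. rewrite <- pow2_abs. apply pow_incr. split; [apply Rabs_pos|].
    pose proof (zsum_term_sub_main phi Hlip Hbnd N r j0 x x' y y' Hy Hj0 Hscale).
    fold h s k a X X' in H0. lra. }
  assert (HE : sqrt ((Mc - Dc) ^ 2 + (Ms - Ds) ^ 2) <= 14 / 100 * s).
  { rewrite <- (sqrt_pow2 (14 / 100 * s)) by lra. apply sqrt_le_1_alt.
    pose proof (Herr cos cos_lipschitz Rabs_cos_le_1).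
    pose proof (Herr sin sin_lipschitz Rabs_sin_le_1).
    fold Dc Ds Mc Ms in H0, H1.
    replace ((Mc - Dc) ^ 2) with ((Dc - Mc) ^ 2) by ring.
    replace ((Ms - Ds) ^ 2) with ((Ds - Ms) ^ 2) by ring. nra. }
  pose proof (sqrt_sum_sqr_triang Mc Ms Dc Ds). lra.
Qed.

Lemma embedding_at_dist_le N x y x' y' : Rabs y' <= Rabs y ->
  euclid_dist 19 (embedding_at N (plane_point x y)) (embedding_at N (plane_point x' y'))
  <= 3855 * dH (plane_point x y) (plane_point x' y').
Proof.
  intros Hy.
  set (T := 3 * (Rabs (x - x') + Rabs (y - y')) + 768 * (sqrt (Rabs (x - x')) * sqrt (Rabs y))).
  pose proof (dH_plane_ge x y x' y'). pose proof (sqrt_mul_le_dH_plane x y x' y').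
  pose proof (Rabs_pos (x - x')). pose proof (Rabs_pos (y - y')).
  assert (HS : 0 <= sqrt (Rabs (x - x')) * sqrt (Rabs y)) by (apply Rmult_le_pos; apply sqrt_pos).
  assert (HT : 0 <= T) by (unfold T; lra).
  assert (H19 : sqrt (INR 19) <= 5).
  { rewrite <- (sqrt_pow2 5) by lra. apply sqrt_le_1_alt. simpl. lra. }
  apply Rle_trans with (sqrt (INR 19) * T).
  - apply euclid_dist_le; [exact HT|]. intros i Hi. unfold plane_point, embedding_at.
    destruct i as [|[|i]]; cbv beta iota; [unfold T; lra | unfold T; lra|].
    destruct (i <? 16)%nat; [|rewrite Rminus_0_r, Rabs_R0; exact HT].
    destruct (Nat.even i); eapply Rle_trans;
      [apply zsum_term_sub_le; auto using cos_lipschitz, Rabs_cos_le_1 | unfold T; lra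
      |apply zsum_term_sub_le; auto using sin_lipschitz, Rabs_sin_le_1 | unfold T; lra].
  - unfold T in *. nra.
Qed.

Lemma embedding_at_dist_ge x y x' y' : Rabs y' <= Rabs y ->
  exists N0, forall N, (N0 <= N)%nat ->
  dH (plane_point x y) (plane_point x' y')
  <= 130 * euclid_dist 19 (embedding_at N (plane_point x y)) (embedding_at N (plane_point x' y')).
Proof.
  intros Hy. pose proof (dH_plane_le x y x' y' Hy) as HdH.
  set (h := Rabs (x - x')) in *. set (dy := Rabs (y - y')) in *.
  set (s := sqrt h * sqrt (Rabs y)) in *.
  assert (Hdy : 0 <= dy) by apply Rabs_pos.
  set (dist := fun N =>
    euclid_dist 19 (embedding_at N (plane_point x y)) (embedding_at N (plane_point x' y'))).
  assert (Hcoord : forall N, h <= dist N /\ dy <= dist N).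
  { intros N. split.
    - apply (Rabs_le_euclid_dist 19 (embedding_at N (plane_point x y))
               (embedding_at N (plane_point x' y')) 0). lia.
    - apply (Rabs_le_euclid_dist 19 (embedding_at N (plane_point x y))
               (embedding_at N (plane_point x' y')) 1). lia. }
  destruct (Rle_lt_dec s (64 * (h + dy))) as [Hbig | Hsmall].
  - exists O. intros N _. destruct (Hcoord N). fold (dist N). lra.
  - assert (Hh : 0 < h).
    { destruct (Rle_lt_or_eq_dec 0 h (Rabs_pos _)) as [? | H0]; [assumption|].
      unfold s in Hsmall. rewrite <- H0, sqrt_0 in Hsmall. lra. }
    destruct (exists_Rpower2_window (sqrt h) 1) as [n Hn]; [apply sqrt_lt_R0, Hh | lra|].
    rewrite Rmult_1_r, Rpower_1, <- (scale_mod8 n) in Hn by lra.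
    set (r := Z.to_nat (n mod 8)) in Hn. set (j0 := (n / 8)%Z) in Hn.
    assert (Hr : (r < 8)%nat) by (unfold r; pose proof (Z.mod_pos_bound n 8); lia).
    exists (S (Z.to_nat (Z.abs j0))). intros N HN.
    pose proof (zsum_cos_sin_sub_ge N r j0 x x' y y' Hy ltac:(lia)
                  (conj (proj1 Hn) (Rlt_le _ _ (proj2 Hn))) (Rlt_le _ _ Hsmall)) as Hpair.
    pose proof (euclid_dist_ge_pair 19
                  (embedding_at N (plane_point x y)) (embedding_at N (plane_point x' y'))
                  (2 + 2 * r) (3 + 2 * r) ltac:(lia) ltac:(lia)) as Hdist.
    unfold plane_point in Hdist. rewrite !embedding_at_cos, !embedding_at_sin in Hdist by exact Hr.
    fold (plane_point x y) (plane_point x' y') (dist N) in Hdist. fold (dist N).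
    fold h in Hpair. fold s in Hpair.
    assert (0 <= s) by (apply Rmult_le_pos; apply sqrt_pos). lra.
Qed.

Lemma embedding_biLipschitz_ordered x y x' y' : Rabs y' <= Rabs y ->
  / 3855 * dH (plane_point x y) (plane_point x' y')
    <= euclid_dist 19 (embedding (plane_point x y)) (embedding (plane_point x' y'))
  /\ euclid_dist 19 (embedding (plane_point x y)) (embedding (plane_point x' y'))
    <= 3855 * dH (plane_point x y) (plane_point x' y').
Proof.
  intros Hy. set (p := plane_point x y). set (q := plane_point x' y').
  assert (Hlim : is_lim_seq (fun N => euclid_dist 19 (embedding_at N p) (embedding_at N q))
                            (euclid_dist 19 (embedding p) (embedding q)))
    by (apply is_lim_seq_euclid_dist; intros; apply is_lim_seq_embedding_at).
  assert (HdH : 0 <= dH p q).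
  { eapply Rle_trans; [|apply dH_plane_ge].
    pose proof (Rabs_pos (x - x')). pose proof (Rabs_pos (y - y')). lra. }
  split.
  - destruct (embedding_at_dist_ge x y x' y' Hy) as [N0 HN0].
    assert (Hle : Rbar_le (dH p q / 130) (euclid_dist 19 (embedding p) (embedding q))).
    { refine (is_lim_seq_le_loc (fun _ => dH p q / 130) _ _ _ _ (is_lim_seq_const _) Hlim).
      exists N0. intros N HN. specialize (HN0 N HN). fold p q in HN0. lra. }
    cbn [Rbar_le] in Hle. lra.
  - apply (is_lim_seq_le _ (fun _ => 3855 * dH p q) _ _ (fun N => embedding_at_dist_le N x y x' y' Hy)
             Hlim (is_lim_seq_const _)).
Qed.

Theorem proposition5p6 : biLipschitz_embeds planeP 19.
Proof.
  exists 3855, embedding. split; [lra|].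
  intros [[x y] z] [[x' y'] z'] Hp Hq. simpl in Hp, Hq. subst z z'.
  destruct (Rle_dec (Rabs y') (Rabs y)) as [Hy | Hy].
  - exact (embedding_biLipschitz_ordered x y x' y' Hy).
  - rewrite (dH_sym (x, y, _)), euclid_dist_sym.
    exact (embedding_biLipschitz_ordered x' y' x y ltac:(lra)).
Qed.
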